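(* Let $d\in\mathbb{N}$, $\ell\in\mathbb{N}_0$, let $k$ be a stationary product kernel on $\mathbb{R}^d$, and let $K_{\mathcal{G}_{\ell,d}}$ be the kernel matrix of $k$ on the $d$-dimensional sparse grid $\mathcal{G}_{\ell,d}$ of resolution $\ell$. For any vector $\mathbf v\in\mathbb{R}^{|\mathcal{G}_{\ell,d}|}$, the Sparse Grid Kernel-MVM Algorithm (described in the context) computes $K_{\mathcal{G}_{\ell,d}}\mathbf v$, and it does so in $O(\ell^{d}2^{\ell})$ time.
   Context: Grids. For $l\in\mathbb{N}_0$ let $\Omega_l=\{i/2^{l+1} : 1\le i\le 2^{l+1},\ i \text{ odd}\}\subset[0,1]$ (so $|\Omega_l|=2^l$ and $\Omega_l\cap\Omega_{l'}=\emptyset$ for $l\neq l'$). For $\mathbf l\in\mathbb{N}_0^d$ let $\Omega_{\mathbf l}=\Omega_{l_1}\times\cdots\times\Omega_{l_d}$. The sparse grid is $\mathcal{G}_{\ell,d}=\bigcup_{\mathbf l\in\mathbb{N}_0^d,\ \|\mathbf l\|_1\le\ell}\Omega_{\mathbf l}\subset[0,1]^d$. One has $\mathcal{G}_{\ell',d}\subseteq\mathcal{G}_{\ell,d}$ for $\ell'\le\ell$, $\mathcal{G}_{\ell,1}=\bigcup_{i=0}^{\ell}\Omega_i$, and for $d\ge2$, $\mathcal{G}_{\ell,d}=\bigcup_{i=0}^{\ell}\Omega_i\times\mathcal{G}_{\ell-i,d-1}$ (a disjoint union). Kernel. A stationary product kernel is $k(\mathbf x,\mathbf x')=\prod_{j=1}^d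 k_j(x_j-x_j')$ for one-dimensional functions $k_j$. For a finite set $U$, $K_U=[k(\mathbf x,\mathbf x')]_{\mathbf x,\mathbf x'\in U}$ with rows/columns indexed by $U$ in a fixed order. In dimension 1, $K_{\mathcal{G}_{\ell,1}}$ (equally spaced points, stationary kernel) is Toeplitz and is multiplied by a vector using fast (FFT-based) Toeplitz multiplication in $O(\ell2^\ell)$ time. Selection matrices. For finite $U\subseteq V$, $\mathcal S_{U,V}\in\{0,1\}^{|U|\times|V|}$ has entry $(a,b)$ equal to $1$ iff the $a$-th element of $U$ equals the $b$-th element of $V$, and $\mathcal S_{V,U}=\mathcal S_{U,V}^T$ (selecting entries, resp. inserting zeros). Algorithm $\mathbf{mvm}(K_{\mathcal{G}_{\ell,d}},\mathbf v)$: For each $i=0,\dots,\ell$ let $V_i$ be the $|\Omega_i|\times|\mathcal{G}_{\ell-i,d-1}|$ matrix obtained by reshaping the entries of $\mathbf v$ indexed by $\Omega_i\times\mathcal{G}_{\ell-i,d-1}$ (row index in $\Omega_i$, column index in $\mathcal{G}_{\ell-i,d-1}$). If $d=1$, return $K_{\mathcal{G}_{\ell,1}}\mathbf v$ (Toeplitz multiplication). Otherwise: (pre-computation) for $i=0,\dots,\ell$ set $\overline A_i=K_{\mathcal{G}_{i,1}}\mathcal S_{\mathcal{G}_{i,1},\Omega_i}V_i$ and $\overline B_i^T=\mathbf{mvm}(K_{\mathcal{G}_{\ell-i,d-1}},V_i^T)$ (recursive multiplication applied to each column); (main loop) for $i=0,\dots,\ell$ set $A_i^T=\mathbf{mvm}\big(K_{\mathcal{G}_{\ell-i,d-1}},\big(\sum_{j>i}\mathcal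 S_{\Omega_i,\mathcal{G}_{j,1}}\overline A_j\,\mathcal S_{\mathcal{G}_{\ell-j,d-1},\mathcal{G}_{\ell-i,d-1}}\big)^T\big)$, $B_i=\mathcal S_{\Omega_i,\mathcal{G}_{i,1}}K_{\mathcal{G}_{i,1}}\big(\sum_{j\le i}\mathcal S_{\mathcal{G}_{i,1},\Omega_j}\overline B_j\,\mathcal S_{\mathcal{G}_{\ell-j,d-1},\mathcal{G}_{\ell-i,d-1}}\big)$, and $\mathbf u_i=\mathrm{vec}(A_i)+\mathrm{vec}(B_i)$; the output $\mathbf u$ is the vector whose entries indexed by $\Omega_i\times\mathcal{G}_{\ell-i,d-1}$ are $\mathbf u_i$ (with vectorization consistent with the reshaping used for $V_i$). *)

From mathcomp Require Import all_boot all_order all_algebra.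
From mathcomp Require Import reals.
Set Implicit Arguments. Unset Strict Implicit. Unset Printing Implicit Defensive.
Import GRing.Theory Num.Theory.

(* A one-dimensional grid point is encoded by (l, i) with i odd, standing for
   the real number i / 2^(l+1) in Omega_l.  A d-dimensional point is a list of
   d such pairs. *)
Definition pt := seq (nat * nat).

Definition Omega (l : nat) : seq (nat * nat) :=
  [seq (l, j.*2.+1) | j <- iota 0 (2 ^ l)].

Definition G1 (L : nat) : seq (nat * nat) := flatten [seq Omega i | i <- iota 0 L.+1].

(* Sparse grid G_{L,d} = union_{|l|_1 <= L} Omega_{l_1} x ... x Omega_{l_d},
   enumerated through the disjoint decomposition
   G_{L,d} = union_{i=0}^{L} Omega_i x G_{L-i,d-1}. *)
Fixpoint SG (L d : nat) : seq pt :=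
  match d with
  | 0 => [:: [::]]
  | d'.+1 => flatten [seq [seq x :: p | x <- Omega i, p <- SG (L - i) d'] | i <- iota 0 L.+1]
  end.

Section Kernel.
Variable R : realType.
Local Open Scope ring_scope.

Definition coord (a : nat * nat) : R := a.2%:R / (2 ^ a.1.+1)%:R.

Definition kern (ks : nat -> R -> R) (p q : pt) : R :=
  \prod_(j < size p) ks j (coord (nth (0%N, 0%N) p j) - coord (nth (0%N, 0%N) q j)).

Definition Kmul (ks : nat -> R -> R) (U : seq pt) (v : pt -> R) : pt -> R :=
  fun x => \sum_(y <- U) kern ks x y * v y.

(* one-dimensional kernel matrix K_U (Toeplitz for U = G_{i,1}) times w *)
Definition K1 (k : R -> R) (U : seq (nat * nat)) (w : nat * nat -> R) : nat * nat -> R :=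
  fun y => \sum_(x <- U) k (coord y - coord x) * w x.

(* One level (d = d'+1 >= 2) of the sparse grid kernel-MVM algorithm; [rec L' w]
   is the recursive multiplication by K_{G_{L',d'}}.  Matrices indexed by
   Omega_i x G_{L-i,d'} are represented as functions; selection matrices become
   restriction / zero insertion (indicator of membership). *)
Definition step (k1 : R -> R) (d' L : nat) (rec : nat -> (pt -> R) -> pt -> R)
  (v : pt -> R) : pt -> R :=
  (* Abar_j = K_{G_{j,1}} S_{G_{j,1},Omega_j} V_j, entry (y,p) *)
  let Abar j p y := K1 k1 (G1 j) (fun x => if x \in Omega j then v (x :: p) else 0) y in
  (* Bbar_j^T = mvm(K_{G_{L-j,d'}}, V_j^T), entry (y,p) *)
  let Bbar j y p := rec (L - j)%N (fun p' => v (y :: p')) p in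
  (* sum_{j>i} S_{Omega_i,G_{j,1}} Abar_j S_{G_{L-j,d'},G_{L-i,d'}} *)
  let M i x p := \sum_(j <- iota i.+1 (L - i))
                   (if p \in SG (L - j) d' then Abar j p x else 0) in
  let A i x p := rec (L - i)%N (fun p' => M i x p') p in
  (* sum_{j<=i} S_{G_{i,1},Omega_j} Bbar_j S_{G_{L-j,d'},G_{L-i,d'}} *)
  let N i p y := \sum_(j <- iota 0 i.+1) (if y \in Omega j then Bbar j y p else 0) in
  let B i x p := K1 k1 (G1 i) (N i p) x in
  fun q => match q with x :: p => A x.1 x p + B x.1 x p | [::] => 0 end.

Fixpoint mvm (ks : nat -> R -> R) (d L : nat) (v : pt -> R) {struct d} : pt -> R :=
  match d with
  | 0 => Kmul ks (SG L 0) v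
  | d'.+1 => if d' is 0 then Kmul ks (SG L 1) v
             else step (ks 0%N) d' L (mvm (fun j => ks j.+1) d') v
  end.
End Kernel.

(* Operation count of mvm, where T n is the cost of one Toeplitz
   multiplication by K_{G_{n,1}}, and every entry of a formed / added /
   selected matrix costs one unit. *)
Fixpoint cost (T : nat -> nat) (d L : nat) {struct d} : nat :=
  match d with
  | 0 => 1
  | d'.+1 =>
    if d' is 0 then T L else
    \sum_(i < L.+1)
      ( (* precomputation: Abar_i and Bbar_i *)
        size (SG (L - i) d') * T i + 2 ^ i * cost T d' (L - i)
        (* A_i: forming the sum of L-i terms, then recursive multiplication *)
      + (L - i) * 2 ^ i * size (SG (L - i) d') + 2 ^ i * cost T d' (L - i)
        (* B_i: forming the sum, Toeplitz products, selection *)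
      + size (G1 i) * size (SG (L - i) d') + size (SG (L - i) d') * T i
      + 2 ^ i * size (SG (L - i) d')
        (* u_i = vec A_i + vec B_i *)
      + 2 ^ i * size (SG (L - i) d'))
  end.

From Pilot Require Import Defs.
From mathcomp Require Import all_boot all_order all_algebra.
From mathcomp Require Import reals zify.
Set Implicit Arguments. Unset Strict Implicit. Unset Printing Implicit Defensive.
Import GRing.Theory.

(* Split the kernel sum at a point x :: p, x in Omega_i, into the blocks
   Omega_j x G_{L-j,d-1} of the sparse grid.  Sparse grids are nested, so for
   j > i the block only involves points of G_{L-i,d-1}: a one-dimensional
   product on G_{j,1} followed by a single recursive product on G_{L-i,d-1}
   computes all of them (A_i).  For j <= i, p lies in every G_{L-j,d-1} and
   Omega_j in G_{i,1}: recursive products followed by a single one-dimensional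
   product on G_{i,1} compute them (B_i).
   For the cost, |G_{L,d}| <= (L+1)^(d-1) 2^(L+1); by induction on d every one
   of the L+1 levels i costs O((L+1)^(d-1) 2^L), because 2^i 2^(L-i) = 2^L. *)

Lemma uniq_flatten_map (S T : eqType) (F : S -> seq T) (s : seq S) :
  uniq s -> {in s, forall i, uniq (F i)} ->
  (forall i j y, y \in F i -> y \in F j -> i = j) ->
  uniq (flatten [seq F i | i <- s]).
Proof.
elim: s => [|i s IHs] //= /andP [i_notin_s uniq_s] uniqF disjF.
rewrite cat_uniq uniqF ?mem_head // IHs // => [|j js]; last by rewrite uniqF // inE js orbT.
rewrite andbT; apply/hasPn => y /flatten_mapP [j js yFj]; apply/negP => yFi.
by move: i_notin_s; rewrite (disjF _ _ _ yFi yFj) js.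
Qed.

Lemma Omega_fst i x : x \in Omega i -> x.1 = i.
Proof. by case/mapP => j _ ->. Qed.

Lemma uniq_Omega i : uniq (Omega i).
Proof. by rewrite map_inj_uniq ?iota_uniq // => a b [/double_inj]. Qed.

Lemma size_Omega i : size (Omega i) = 2 ^ i.
Proof. by rewrite size_map size_iota. Qed.

Lemma sub_Omega_G1 i n : i <= n -> {subset Omega i <= G1 n}.
Proof. by move=> le_in x xO; apply/flatten_mapP; exists i; rewrite // mem_iota /= ltnS. Qed.

Lemma uniq_G1 n : uniq (G1 n).
Proof.
apply: uniq_flatten_map => [|i _|i j y /Omega_fst <- /Omega_fst <-];
  by rewrite ?iota_uniq ?uniq_Omega.
Qed.

Lemma sum_pow2 n : \sum_(i <- iota 0 n) 2 ^ i = (2 ^ n).-1.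
Proof. by rewrite predn_exp -(big_mkord xpredT) /index_iota subn0 mul1n. Qed.

Lemma size_G1 n : size (G1 n) = (2 ^ n.+1).-1.
Proof.
rewrite size_flatten /shape -map_comp sumnE big_map -sum_pow2.
by under eq_bigr do rewrite /= size_Omega.
Qed.

Lemma SGS n d : SG n d.+1 =
  flatten [seq [seq x :: p | x <- Omega i, p <- SG (n - i) d] | i <- iota 0 n.+1].
Proof. by []. Qed.

Lemma nil_notin_SGS n d : [::] \notin SG n d.+1.
Proof. by apply/negP => /flatten_mapP [i _ /allpairsP [[x p] []]]. Qed.

Lemma mem_SGS n d x p :
  (x :: p \in SG n d.+1) = [&& x.1 <= n, x \in Omega x.1 & p \in SG (n - x.1) d].
Proof.
apply/flatten_mapP/and3P => [[i] | [le_xn xO pG]].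
  rewrite mem_iota /= ltnS => le_in /allpairsP [[y q] /= [yO qG [-> ->]]].
  by rewrite (Omega_fst yO).
by exists x.1; rewrite ?mem_iota //; apply/allpairsP; exists (x, p).
Qed.

Lemma sub_SG d n m : n <= m -> {subset SG n d <= SG m d}.
Proof.
elim: d n m => [|d IHd] n m le_nm [|x p] //; first by rewrite (negbTE (nil_notin_SGS _ _)).
rewrite !mem_SGS => /and3P [le_xn -> pG]; rewrite (leq_trans le_xn) //=.
exact: IHd (leq_sub2r _ le_nm) _ pG.
Qed.

Lemma uniq_SG n d : uniq (SG n d).
Proof.
elim: d n => [|d IHd] n //; rewrite SGS.
apply: uniq_flatten_map => [|i _|i j _ /allpairsP [[x p] /= [xO _ ->]]].
- exact: iota_uniq.
- by apply: allpairs_uniq => [||[x p] [y q] _ _ /= [-> ->]]; rewrite ?uniq_Omega.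
by case/allpairsP => -[y q] /= [yO _ [xy _]]; rewrite -(Omega_fst xO) -(Omega_fst yO) xy.
Qed.

Lemma size_SGS n d :
  size (SG n d.+1) = \sum_(i <- iota 0 n.+1) 2 ^ i * size (SG (n - i) d).
Proof.
rewrite SGS size_flatten /shape -map_comp sumnE big_map.
by apply: eq_bigr => i _; rewrite /= size_allpairs size_Omega.
Qed.

Lemma leq_exp2rW m n e : m <= n -> m ^ e <= n ^ e.
Proof. by move=> le_mn; elim: e => // e IHe; rewrite !expnS leq_mul. Qed.

Lemma size_SG n d : size (SG n d.+1) <= n.+1 ^ d * 2 ^ n.+1.
Proof.
elim: d n => [|d IHd] n.
  by rewrite size_SGS mul1n; under eq_bigr do rewrite muln1; rewrite sum_pow2 leq_pred.
rewrite size_SGS; apply: (@leq_trans (\sum_(i <- iota 0 n.+1) n.+1 ^ d * 2 ^ n.+1)).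
  rewrite !big_seq; apply: leq_sum => i; rewrite mem_iota /= ltnS => le_in.
  rewrite (leq_trans (leq_mul (leqnn _) (IHd _))) // mulnCA leq_mul ?leq_exp2rW ?ltnS ?leq_subr //.
  by rewrite -expnD addnS subnKC.
by rewrite big_const_seq count_predT size_iota iter_addn_0 (expnS n.+1) mulnAC (mulnC n.+1).
Qed.

Section BigSeq.
Local Open Scope ring_scope.

Lemma big_pred1_seq (V : nmodType) (I : eqType) (r : seq I) (i : I) (P : pred I) (F : I -> V) :
  uniq r -> i \in r -> P =1 pred1 i -> \sum_(j <- r | P j) F j = F i.
Proof.
move=> uniq_r ir eqP1; rewrite (eq_bigl _ _ eqP1) -big_filter.
by rewrite filter_pred1_uniq // big_seq1.
Qed.

Lemma big_subseq_uniq (V : nmodType) (I : eqType) (s t : seq I) (F : I -> V) :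
  uniq s -> uniq t -> {subset t <= s} -> \sum_(y <- t) F y = \sum_(y <- s | y \in t) F y.
Proof.
move=> uniq_s uniq_t sub_ts; rewrite -[RHS]big_filter; apply: perm_big.
apply: uniq_perm => // [|y]; first exact: filter_uniq.
by rewrite mem_filter; case ty: (y \in t); rewrite /= ?sub_ts.
Qed.

End BigSeq.

Section Correctness.
Variable R : realType.
Local Open Scope ring_scope.
Implicit Types (ks : nat -> R -> R) (v : pt -> R).

Lemma kern_cons ks x y p q : kern ks (x :: p) (y :: q) =
  ks 0%N (Defs.coord R x - Defs.coord R y) * kern (fun j => ks j.+1) p q.
Proof. by rewrite /kern big_ord_recl. Qed.

Lemma K1_G1_Omega k j (w : nat * nat -> R) y :
  K1 k (G1 j) (fun x => if x \in Omega j then w x else 0) y =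
  \sum_(x <- Omega j) k (Defs.coord R y - Defs.coord R x) * w x.
Proof.
rewrite /K1 (big_subseq_uniq _ (uniq_G1 j) (uniq_Omega j) (sub_Omega_G1 (leqnn j))).
by rewrite [RHS]big_mkcond; apply: eq_bigr => x _; case: ifP; rewrite ?mulr0.
Qed.

Definition Kblock ks d L v x p j : R :=
  \sum_(x' <- Omega j) \sum_(p' <- SG (L - j) d)
    ks 0%N (Defs.coord R x - Defs.coord R x') * kern (fun n => ks n.+1) p p' * v (x' :: p').

Lemma Kmul_SGS ks d L v x p :
  Kmul ks (SG L d.+1) v (x :: p) = \sum_(j <- iota 0 L.+1) Kblock ks d L v x p j.
Proof.
rewrite /Kmul SGS big_flatten big_map; apply: eq_bigr => j _.
rewrite big_allpairs_dep; apply: eq_bigr => x' _; apply: eq_bigr => p' _.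
by rewrite kern_cons.
Qed.

Section Step.
Variables (ks : nat -> R -> R) (d : nat) (rec : nat -> (pt -> R) -> pt -> R).
Hypothesis rec_correct : forall n w p,
  p \in SG n d -> rec n w p = Kmul (fun j => ks j.+1) (SG n d) w p.

Lemma step_lower_blocks L v x p i : p \in SG (L - i) d ->
  K1 (ks 0%N) (G1 i) (fun y => \sum_(j <- iota 0 i.+1)
      (if y \in Omega j then rec (L - j) (fun p' => v (y :: p')) p else 0)) x =
  \sum_(j <- iota 0 i.+1) Kblock ks d L v x p j.
Proof.
move=> pG; rewrite /K1 /G1 big_flatten big_map.
apply: eq_big_seq => l li; apply: eq_big_seq => y yO.
rewrite -big_mkcond (big_pred1_seq _ (iota_uniq _ _) li); last first.
  by move=> j; apply/idP/eqP => [/Omega_fst <- | ->]; rewrite ?(Omega_fst yO).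
have le_li : (l <= i)%N by move: li; rewrite mem_iota add0n ltnS.
rewrite rec_correct ?(sub_SG (leq_sub2l L le_li) pG) //.
by rewrite /Kmul mulr_sumr; apply: eq_bigr => p' _; rewrite mulrA.
Qed.

Lemma step_upper_blocks L v x p i : p \in SG (L - i) d ->
  rec (L - i) (fun p' => \sum_(j <- iota i.+1 (L - i)) (if p' \in SG (L - j) d then
     K1 (ks 0%N) (G1 j) (fun y => if y \in Omega j then v (y :: p') else 0) x else 0)) p =
  \sum_(j <- iota i.+1 (L - i)) Kblock ks d L v x p j.
Proof.
move=> pG; rewrite rec_correct // /Kmul; under eq_bigr do rewrite mulr_sumr.
rewrite exchange_big; apply: eq_big_seq => j; rewrite mem_iota => /andP [lt_ij _].
have sub_ji := sub_SG (leq_sub2l L (ltnW lt_ij)) (d := d).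
rewrite /Kblock exchange_big (big_subseq_uniq _ (uniq_SG _ _) (uniq_SG _ _) sub_ji).
rewrite [RHS]big_mkcond; apply: eq_bigr => p' _; case: ifP => _; last by rewrite mulr0.
rewrite K1_G1_Omega mulr_sumr; apply: eq_bigr => x' _.
by rewrite mulrCA mulrA.
Qed.

Lemma step_correct L v q : q \in SG L d.+1 ->
  step (ks 0%N) d L rec v q = Kmul ks (SG L d.+1) v q.
Proof.
case: q => [|x p]; first by rewrite (negbTE (nil_notin_SGS _ _)).
rewrite mem_SGS => /and3P [le_xL _ pG].
have split_levels : L.+1 = (x.1.+1 + (L - x.1))%N by rewrite addSn subnKC.
rewrite Kmul_SGS split_levels iotaD big_cat add0n /= addrC.
by rewrite step_upper_blocks ?step_lower_blocks.
Qed.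

End Step.

Lemma mvm_correct ks d L v q :
  q \in SG L d.+1 -> mvm ks d.+1 L v q = Kmul ks (SG L d.+1) v q.
Proof.
elim: d ks L v q => [|d IHd] ks L v q qG //.
by apply: step_correct qG; apply: IHd.
Qed.

End Correctness.

Definition level_cost (T : nat -> nat) (d L i : nat) : nat :=
  size (SG (L - i) d) * T i + 2 ^ i * cost T d (L - i)
  + (L - i) * 2 ^ i * size (SG (L - i) d) + 2 ^ i * cost T d (L - i)
  + size (G1 i) * size (SG (L - i) d) + size (SG (L - i) d) * T i
  + 2 ^ i * size (SG (L - i) d) + 2 ^ i * size (SG (L - i) d).

Lemma costSS T d L : cost T d.+2 L = \sum_(i < L.+1) level_cost T d.+1 L i.
Proof. by []. Qed.

Section CostBound.
Variables (T : nat -> nat) (c : nat).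
Hypothesis T_bound : forall n, T n <= c * n.+1 * 2 ^ n.

Lemma cost_level_bound e C L i :
  (forall m, cost T e.+1 m <= C * m.+1 ^ e.+1 * 2 ^ m) -> i <= L ->
  level_cost T e.+1 L i <= (4 * c + 2 * C + 10) * (L.+1 ^ e.+1 * 2 ^ L).
Proof.
move=> cost_e le_iL.
have split_pow : 2 ^ i * 2 ^ (L - i) = 2 ^ L by rewrite -expnD subnKC.
have le_levels : (L - i).+1 <= L.+1 by rewrite ltnS leq_subr.
have size_le : 2 ^ i * size (SG (L - i) e.+1) <= 2 * (L.+1 ^ e * 2 ^ L).
  rewrite -split_pow (leq_trans (leq_mul (leqnn _) (size_SG _ _))) // expnS.
  rewrite mulnCA (mulnCA (2 ^ i)) [leqRHS]mulnCA.
  exact: leq_mul (leq_exp2rW _ le_levels) (leqnn _).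
have cost_le : 2 ^ i * cost T e.+1 (L - i) <= C * (L.+1 ^ e.+1 * 2 ^ L).
  rewrite -split_pow (leq_trans (leq_mul (leqnn _) (cost_e _))) //.
  rewrite mulnCA -mulnA.
  exact: leq_mul (leqnn _) (leq_mul (leq_exp2rW _ le_levels) (leqnn _)).
have T_le : T i <= c * L.+1 * 2 ^ i by rewrite (leq_trans (T_bound i)) // !leq_mul.
have G1_le : size (G1 i) <= 2 * 2 ^ i by rewrite size_G1 -expnS leq_pred.
move: size_le cost_le T_le G1_le; rewrite /level_cost expnS.
set s := size _; set k := cost _ _ _; set P := 2 ^ i; set N := L.+1 ^ e; set E := 2 ^ L.
move=> size_le cost_le T_le G1_le.
have := leq_mul (leqnn s) T_le; have := leq_mul (leqnn (c * L.+1)) size_le.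
have := leq_mul G1_le (leqnn s); have := leq_mul (leq_subr i L) size_le.
lia.
Qed.

Lemma cost_bound e : exists C, forall L, cost T e.+1 L <= C * L.+1 ^ e.+1 * 2 ^ L.
Proof.
elim: e => [|e [C cost_e]]; first by exists c => L; rewrite expn1.
exists (4 * c + 2 * C + 10) => L; rewrite costSS.
apply: leq_trans (_ : \sum_(i < L.+1) (4 * c + 2 * C + 10) * (L.+1 ^ e.+1 * 2 ^ L) <= _).
  by apply: leq_sum => i _; apply: cost_level_bound cost_e _; rewrite -ltnS.
by rewrite sum_nat_const card_ord (expnS L.+1 e.+1) mulnCA !mulnA.
Qed.

End CostBound.

Theorem theorem1 (R : realType) (d : nat) (hd : (0 < d)%N) :
  (* correctness: the algorithm computes K_{G_{L,d}} v on the sparse grid *)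
  (forall (ks : nat -> R -> R) (L : nat) (v : pt -> R) (q : pt),
      q \in SG L d -> mvm ks d L v q = Kmul ks (SG L d) v q)
  /\
  (* complexity: with O(n 2^n) Toeplitz multiplication, O(L^d 2^L) operations *)
  (forall (T : nat -> nat) (c : nat),
      (forall n, T n <= c * n.+1 * 2 ^ n)%N ->
      exists C : nat, forall L : nat, (cost T d L <= C * L.+1 ^ d * 2 ^ L)%N).
Proof.
case: d hd => // d _; split => [ks L v q | T c T_bound].
  exact: mvm_correct.
exact: cost_bound T_bound d.
Qed.
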